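(* Let $n\in\mathbb{N}$, $r\in(0,+\infty)$, let $A$ be an Arens–Michael algebra and let $a=(a_1,\dots,a_n)\in A^n$ be strictly spectrally $r$-contractive. Then there exists a unique continuous homomorphism $\gamma_a:\mathcal{F}^T(\mathbb{D}_r^n)\to A$ with $\gamma_a(\zeta_i)=a_i$ for $i=1,\dots,n$. Conversely, for every continuous homomorphism $\varphi:\mathcal{F}^T(\mathbb{D}_r^n)\to A$, the tuple $(\varphi(\zeta_1),\dots,\varphi(\zeta_n))$ is strictly spectrally $r$-contractive. Hence $a\mapsto\gamma_a$ is a bijection (natural in $A$) from the set of strictly spectrally $r$-contractive $n$-tuples in $A^n$ onto the set of continuous homomorphisms $\mathcal{F}^T(\mathbb{D}_r^n)\to A$.
   Context: All algebras are unital, homomorphisms unital. An Arens–Michael algebra is a complete locally convex algebra whose topology is given by a family of submultiplicative seminorms. $W_n$ is the set of all finite words $\alpha=(\alpha_1,\dots,\alpha_d)$ with $\alpha_j\in\{1,\dots,n\}$, $d\ge0$, $|\alpha|=d$; $W_{n,d}$ the words of length $d$; for $a\in A^n$, $a_\alpha=a_{\alpha_1}\cdots a_{\alpha_d}$ ($a_\emptyset=1$). $\mathcal{F}^T(\mathbb{D}_r^n)=\{\sum_{\alpha\in W_n}c_\alpha\zeta_\alpha:\|\cdot\|_\rho<\infty\ \forall\rho\in(0,r)\}$ with $\|\sum c_\alpha\zeta_\alpha\|_\rho=\sum_\alpha|c_\alpha|\rho^{|\alpha|}$, topology given by these norms and multiplication by concatenation of words. For a Banach algebra $B$ and $b\in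 B^n$, $r_\infty(b)=\lim_{d\to\infty}(\sup_{\alpha\in W_{n,d}}\|b_\alpha\|)^{1/d}$. An $n$-tuple $a\in A^n$ in an Arens–Michael algebra $A$ is strictly spectrally $r$-contractive if for every Banach algebra $B$ and every continuous homomorphism $\varphi:A\to B$ one has $r_\infty(\varphi(a))<r$; equivalently, for every continuous submultiplicative seminorm $\|\cdot\|$ on $A$ from a directed defining family, $\lim_{d\to\infty}(\sup_{\alpha\in W_{n,d}}\|a_\alpha\|)^{1/d}<r$. *)

From Stdlib Require Import Reals Lra List.
Import ListNotations.
Open Scope R_scope.

Definition C : Type := (R * R)%type.
Definition C0 : C := (0, 0).
Definition C1 : C := (1, 0).
Definition Cadd (z w : C) : C := (fst z + fst w, snd z + snd w).
Definition Cmul (z w : C) : C :=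
  (fst z * fst w - snd z * snd w, fst z * snd w + snd z * fst w).
Definition Cnorm (z : C) : R := sqrt (fst z ^ 2 + snd z ^ 2).
Definition Csum (l : list C) : C := fold_right Cadd C0 l.

Definition directed {D : Type} (le : D -> D -> Prop) : Prop :=
  inhabited D /\ (forall x, le x x) /\
  (forall x y z, le x y -> le y z -> le x z) /\
  (forall x y, exists z, le x z /\ le y z).

Record AMAlgebra : Type := {
  carrier :> Type;
  zero : carrier;
  one : carrier;
  add : carrier -> carrier -> carrier;
  opp : carrier -> carrier;
  mul : carrier -> carrier -> carrier;
  scal : C -> carrier -> carrier;
  idx : Type;
  sn : idx -> carrier -> R;
  addA : forall x y z, add x (add y z) = add (add x y) z;
  addC : forall x y, add x y = add y x;
  add0 : forall x, add zero x = x;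
  addN : forall x, add x (opp x) = zero;
  mulA : forall x y z, mul x (mul y z) = mul (mul x y) z;
  mul1l : forall x, mul one x = x;
  mul1r : forall x, mul x one = x;
  mulDl : forall x y z, mul (add x y) z = add (mul x z) (mul y z);
  mulDr : forall x y z, mul x (add y z) = add (mul x y) (mul x z);
  scalA : forall l m x, scal (Cmul l m) x = scal l (scal m x);
  scal1 : forall x, scal C1 x = x;
  scalDr : forall l x y, scal l (add x y) = add (scal l x) (scal l y);
  scalDl : forall l m x, scal (Cadd l m) x = add (scal l x) (scal m x);
  scalMl : forall l x y, scal l (mul x y) = mul (scal l x) y;
  scalMr : forall l x y, scal l (mul x y) = mul x (scal l y);
  sn_nonneg : forall i x, 0 <= sn i x;
  sn_triangle : forall i x y, sn i (add x y) <= sn i x + sn i y;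
  sn_homog : forall i l x, sn i (scal l x) = Cnorm l * sn i x;
  sn_submult : forall i x y, sn i (mul x y) <= sn i x * sn i y;
  hausdorff : forall x, (forall i, sn i x = 0) -> x = zero;
  complete : forall (D : Type) (le : D -> D -> Prop) (x : D -> carrier),
    directed le ->
    (forall i eps, 0 < eps -> exists d0, forall d1 d2, le d0 d1 -> le d0 d2 ->
        sn i (add (x d1) (opp (x d2))) < eps) ->
    exists l : carrier, forall i eps, 0 < eps -> exists d0, forall d, le d0 d ->
        sn i (add (x d) (opp l)) < eps
}.

Definition submult_seminorm (A : AMAlgebra) (q : A -> R) : Prop :=
  (forall x, 0 <= q x) /\
  (forall x y, q (add A x y) <= q x + q y) /\
  (forall l x, q (scal A l x) = Cnorm l * q x) /\
  (forall x y, q (mul A x y) <= q x * q y).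

Definition cont_seminorm (A : AMAlgebra) (q : A -> R) : Prop :=
  exists (l : list (idx A)) (K : R),
    forall x, q x <= K * fold_right (fun i s => sn A i x + s) 0 l.

(* ---------- Words ----------
   Letters are 0, ..., n-1 (the paper's 1, ..., n shifted by one).
   words n d = W_{n,d}, the list of all words of length d. *)
Fixpoint words (n d : nat) : list (list nat) :=
  match d with
  | O => [[]]
  | S d' => flat_map (fun i => map (cons i) (words n d')) (seq 0 n)
  end.

Definition word_prod (A : AMAlgebra) (a : nat -> A) (w : list nat) : A :=
  fold_right (fun i acc => mul A (a i) acc) (one A) w.

(* sup_{alpha in W_{n,d}} q(a_alpha)  (finite maximum; 0 if W_{n,d} is empty) *)
Definition word_sup (A : AMAlgebra) (q : A -> R) (n d : nat) (a : nat -> A) : R :=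
  fold_right Rmax 0 (map (fun w => q (word_prod A a w)) (words n d)).

Definition rootn (d : nat) (x : R) : R :=
  if Rle_dec x 0 then 0 else Rpower x (/ INR d).

Definition strictly_spectrally_contractive (A : AMAlgebra) (n : nat) (r : R)
    (a : nat -> A) : Prop :=
  forall q : A -> R, submult_seminorm A q -> cont_seminorm A q ->
    exists L : R,
      Un_cv (fun d => rootn (S d) (word_sup A q n (S d) a)) L /\ L < r.

Definition layer (n : nat) (c : list nat -> C) (rho : R) (d : nat) : R :=
  fold_right Rplus 0 (map (fun w => Cnorm (c w) * rho ^ d) (words n d)).

Definition norm_partial (n : nat) (c : list nat -> C) (rho : R) (N : nat) : R :=
  sum_f_R0 (layer n c rho) N.

Definition in_FT (n : nat) (r : R) (c : list nat -> C) : Prop :=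
  (forall w, ~ Forall (fun i => (i < n)%nat) w -> c w = C0) /\
  (forall rho, 0 < rho < r -> exists s, Un_cv (norm_partial n c rho) s).

Definition FT (n : nat) (r : R) : Type := { c : list nat -> C | in_FT n r c }.

Definition coef {n r} (f : FT n r) : list nat -> C := proj1_sig f.

(* multiplication by concatenation of words *)
Definition conv (f g : list nat -> C) (w : list nat) : C :=
  Csum (map (fun k => Cmul (f (firstn k w)) (g (skipn k w))) (seq 0 (S (length w)))).

Definition unit_coef (w : list nat) : C :=
  match w with [] => C1 | _ => C0 end.

Definition zeta (i : nat) (w : list nat) : C :=
  match w with [k] => if Nat.eq_dec k i then C1 else C0 | _ => C0 end.

(* continuous unital algebra homomorphism F^T(D_r^n) -> A
   (operations of F^T are described on coefficients) *)
Definition cont_hom (A : AMAlgebra) (n : nat) (r : R) (g : FT n r -> A) : Prop :=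
  (forall f1 f2 h : FT n r, (forall w, coef h w = Cadd (coef f1 w) (coef f2 w)) ->
      g h = add A (g f1) (g f2)) /\
  (forall (l : C) (f h : FT n r), (forall w, coef h w = Cmul l (coef f w)) ->
      g h = scal A l (g f)) /\
  (forall f1 f2 h : FT n r, (forall w, coef h w = conv (coef f1) (coef f2) w) ->
      g h = mul A (g f1) (g f2)) /\
  (forall h : FT n r, (forall w, coef h w = unit_coef w) -> g h = one A) /\
  (forall j : idx A, exists rho K, 0 < rho < r /\
      forall (f : FT n r) (s : R), Un_cv (norm_partial n (coef f) rho) s ->
        sn A j (g f) <= K * s).

Definition maps_gens (A : AMAlgebra) (n : nat) (r : R) (g : FT n r -> A)
    (b : nat -> A) : Prop :=
  forall i, (i < n)%nat -> forall h : FT n r,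
    (forall w, coef h w = zeta i w) -> g h = b i.

(* Strict spectral r-contractivity of a is equivalent to: for every defining seminorm of A there
   are rho < r and M with |a_w| <= M rho^|w| for all words w (one direction by the definition of the
   limit, the other by Fekete's lemma applied to the submultiplicative sequence of maximal word
   seminorms).  Under such bounds the partial sums of sum_w c_w a_w are Cauchy whenever
   ||c||_rho < oo, and their limit gamma_a(c) is a continuous homomorphism; multiplicativity is a
   Mertens-type estimate for the Cauchy product of the layers.  A continuous homomorphism agrees
   with gamma_a on finitely supported series, which are dense, so gamma_a is unique.  Conversely,
   continuity of phi gives the geometric bounds for the tuple phi(zeta). *)
From Stdlib Require Import Reals Lra Lia List Classical ClassicalEpsilon.
Import ListNotations.
Open Scope R_scope.

Lemma Cnorm_C0 : Cnorm C0 = 0.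
Proof. unfold Cnorm; cbn [fst snd C0]. replace (0 ^ 2 + 0 ^ 2) with 0 by ring. apply sqrt_0. Qed.

Lemma Cnorm_C1 : Cnorm C1 = 1.
Proof. unfold Cnorm; cbn [fst snd C1]. replace (1 ^ 2 + 0 ^ 2) with 1 by ring. apply sqrt_1. Qed.

Lemma Cnorm_Cm1 : Cnorm (-1, 0) = 1.
Proof. unfold Cnorm; cbn [fst snd]. replace ((-1) ^ 2 + 0 ^ 2) with 1 by ring. apply sqrt_1. Qed.

Lemma Cnorm_ge0 z : 0 <= Cnorm z.
Proof. apply sqrt_pos. Qed.

Lemma Cadd0r z : Cadd z C0 = z.
Proof. destruct z; unfold Cadd, C0; simpl; f_equal; ring. Qed.
Lemma Cadd0l z : Cadd C0 z = z.
Proof. destruct z; unfold Cadd, C0; simpl; f_equal; ring. Qed.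
Lemma Cmul0l z : Cmul C0 z = C0.
Proof. destruct z; unfold Cmul, C0; simpl; f_equal; ring. Qed.
Lemma Cmul0r z : Cmul z C0 = C0.
Proof. destruct z; unfold Cmul, C0; simpl; f_equal; ring. Qed.
Lemma Cmul1l z : Cmul C1 z = z.
Proof. destruct z; unfold Cmul, C1; simpl; f_equal; ring. Qed.
Lemma Cmul1r z : Cmul z C1 = z.
Proof. destruct z; unfold Cmul, C1; simpl; f_equal; ring. Qed.

Section AlgebraFacts.
Variable A : AMAlgebra.

Definition sub (x y : A) : A := add A x (opp A y).

Lemma add0r (x : A) : add A x (zero A) = x.
Proof. rewrite addC, add0; auto. Qed.
Lemma addNl (x : A) : add A (opp A x) x = zero A.
Proof. rewrite addC, addN; auto. Qed.

Lemma opp_uniq (x y : A) : add A x y = zero A -> y = opp A x.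
Proof. intro H. rewrite <- (add0 A y), <- (addNl x), <- addA, H, add0r; auto. Qed.

Lemma idem_zero (y : A) : y = add A y y -> y = zero A.
Proof.
  intro H. assert (H0 : add A (add A y y) (opp A y) = zero A) by (rewrite <- H; apply addN).
  rewrite <- addA, addN, add0r in H0. auto.
Qed.

Lemma scal0 (x : A) : scal A C0 x = zero A.
Proof. apply idem_zero. rewrite <- scalDl. f_equal. unfold Cadd, C0; simpl; f_equal; ring. Qed.
Lemma scal_zero l : scal A l (zero A) = zero A.
Proof. apply idem_zero. rewrite <- scalDr, add0; auto. Qed.

Lemma scalN (x : A) : scal A (-1, 0) x = opp A x.
Proof.
  apply opp_uniq. rewrite <- (scal1 A x) at 1. rewrite <- scalDl.
  replace (Cadd C1 (-1, 0)) with C0 by (unfold Cadd, C0, C1; simpl; f_equal; ring).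
  apply scal0.
Qed.

Lemma mul0l (x : A) : mul A (zero A) x = zero A.
Proof. apply idem_zero. rewrite <- mulDl, add0; auto. Qed.
Lemma mul0r (x : A) : mul A x (zero A) = zero A.
Proof. apply idem_zero. rewrite <- mulDr, add0; auto. Qed.

Lemma oppK (x : A) : opp A (opp A x) = x.
Proof. symmetry. apply opp_uniq, addNl. Qed.
Lemma oppD (x y : A) : opp A (add A x y) = add A (opp A x) (opp A y).
Proof.
  symmetry; apply opp_uniq.
  rewrite (addC A (opp A x)), addA, <- (addA A x y), addN, add0r, addN; auto.
Qed.
Lemma mulNl (x y : A) : mul A (opp A x) y = opp A (mul A x y).
Proof. apply opp_uniq. rewrite <- mulDl, addN, mul0l; auto. Qed.
Lemma mulNr (x y : A) : mul A x (opp A y) = opp A (mul A x y).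
Proof. apply opp_uniq. rewrite <- mulDr, addN, mul0r; auto. Qed.

Lemma add_swap4 (x y u v : A) :
  add A (add A x y) (add A u v) = add A (add A x u) (add A y v).
Proof. rewrite <- !addA. f_equal. rewrite !addA. f_equal. apply addC. Qed.

Lemma sub_eq0 (x y : A) : sub x y = zero A -> x = y.
Proof. unfold sub; intro H. apply opp_uniq in H. rewrite <- (oppK x), <- H, oppK; auto. Qed.
Lemma subrr (x : A) : sub x x = zero A.
Proof. apply addN. Qed.
Lemma subKr (x y : A) : add A (sub x y) y = x.
Proof. unfold sub. rewrite <- addA, addNl, add0r; auto. Qed.
Lemma subDD (x y u v : A) : sub (add A x y) (add A u v) = add A (sub x u) (sub y v).
Proof. unfold sub. rewrite oppD. apply add_swap4. Qed.
Lemma subZ l (x y : A) : sub (scal A l x) (scal A l y) = scal A l (sub x y).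
Proof.
  unfold sub. rewrite scalDr, <- !scalN, <- !scalA. do 2 f_equal.
  destruct l; unfold Cmul; simpl; f_equal; ring.
Qed.
Lemma subMl (x y z : A) : sub (mul A x z) (mul A y z) = mul A (sub x y) z.
Proof. unfold sub. rewrite mulDl, mulNl; auto. Qed.
Lemma subMr (x y z : A) : sub (mul A z x) (mul A z y) = mul A z (sub x y).
Proof. unfold sub. rewrite mulDr, mulNr; auto. Qed.

Lemma sn0 i : sn A i (zero A) = 0.
Proof. rewrite <- (scal0 (zero A)), sn_homog, Cnorm_C0; ring. Qed.
Lemma snN i (x : A) : sn A i (opp A x) = sn A i x.
Proof. rewrite <- scalN, sn_homog, Cnorm_Cm1; ring. Qed.

Lemma sn_subC i (x y : A) : sn A i (sub x y) = sn A i (sub y x).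
Proof. rewrite <- snN. unfold sub. rewrite oppD, oppK, addC; auto. Qed.

Lemma sn_sub_triangle i (x y z : A) :
  sn A i (sub x z) <= sn A i (sub x y) + sn A i (sub y z).
Proof.
  replace (sub x z) with (add A (sub x y) (sub y z)) by
    (unfold sub; rewrite <- addA, (addA A (opp A y)), addNl, add0; auto).
  apply sn_triangle.
Qed.

Lemma sn_submult_seminorm i : submult_seminorm A (sn A i).
Proof.
  split; [|split; [|split]]; intros.
  - apply sn_nonneg.
  - apply sn_triangle.
  - apply sn_homog.
  - apply sn_submult.
Qed.

End AlgebraFacts.

Lemma NoDup_flat_map {X Y} (f : X -> list Y) (l : list X) :
  NoDup l -> (forall x, In x l -> NoDup (f x)) ->
  (forall x y z, In x l -> In y l -> x <> y -> In z (f x) -> ~ In z (f y)) ->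
  NoDup (flat_map f l).
Proof.
  induction l as [|x l IH]; simpl; intros Hl Hf Hd. constructor.
  inversion Hl; subst. apply NoDup_app; auto.
  - apply IH; auto. intros x0 y0 z0 Q1 Q2 Q3; apply Hd; auto.
  - intros z Hz Hz'. apply in_flat_map in Hz'. destruct Hz' as [y [Hy Hzy]].
    apply (Hd x y z); auto. intro; subst; auto.
Qed.

Lemma NoDup_map_cons (i : nat) (l : list (list nat)) : NoDup l -> NoDup (map (cons i) l).
Proof.
  induction 1; simpl; constructor; auto.
  intro H1. apply in_map_iff in H1. destruct H1 as [u [Hu Hin]]. inversion Hu; subst; auto.
Qed.

Lemma words_spec n d w :
  In w (words n d) <-> length w = d /\ Forall (fun i => (i < n)%nat) w.
Proof.
  revert w; induction d; intro w; simpl.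
  - split.
    + intros [H|[]]; subst; simpl; auto.
    + intros [H1 H2]; left; destruct w; simpl in *; auto; discriminate.
  - rewrite in_flat_map. split.
    + intros [i [Hi Hw]]. apply in_map_iff in Hw. destruct Hw as [u [<- Hu]].
      apply IHd in Hu. apply in_seq in Hi. destruct Hu; simpl; split; auto.
      constructor; auto; lia.
    + intros [H1 H2]. destruct w as [|i u]; simpl in H1; [discriminate|].
      inversion H2; subst. exists i; split. apply in_seq; lia.
      apply in_map. apply IHd. split; auto.
Qed.

Lemma words_nodup n d : NoDup (words n d).
Proof.
  induction d; simpl. repeat constructor; auto.
  apply NoDup_flat_map. apply seq_NoDup.
  - intros; apply NoDup_map_cons; auto.
  - intros x y z _ _ Hxy Hx Hy. apply in_map_iff in Hx, Hy.
    destruct Hx as [u [<- _]]. destruct Hy as [v [Hv _]]. inversion Hv; auto.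
Qed.

Lemma lsum_le {X} (f g : X -> R) l : (forall x, In x l -> f x <= g x) ->
  fold_right Rplus 0 (map f l) <= fold_right Rplus 0 (map g l).
Proof. induction l; simpl; intro H. lra. apply Rplus_le_compat; auto. Qed.

Lemma lsum_scal {X} (f : X -> R) c l :
  fold_right Rplus 0 (map (fun x => c * f x) l) = c * fold_right Rplus 0 (map f l).
Proof. induction l; simpl. ring. rewrite IHl; ring. Qed.

Lemma lsum_ge0 {X} (f : X -> R) l : (forall x, In x l -> 0 <= f x) ->
  0 <= fold_right Rplus 0 (map f l).
Proof. induction l; simpl; intro H. lra. apply Rplus_le_le_0_compat; auto. Qed.

Lemma lsum_zero {X} (f : X -> R) l : (forall x, In x l -> f x = 0) ->
  fold_right Rplus 0 (map f l) = 0.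
Proof. induction l; simpl; intro H; auto. rewrite (H a), IHl; auto. ring. Qed.

Lemma lsum_single {X} (f : X -> R) l y :
  NoDup l -> In y l -> (forall x, In x l -> x <> y -> f x = 0) ->
  fold_right Rplus 0 (map f l) = f y.
Proof.
  induction l; simpl; intros Hn Hy H. destruct Hy.
  inversion Hn; subst. destruct Hy as [<-|Hy].
  - rewrite lsum_zero. ring. intros x Hx. apply H; auto. intro; subst; auto.
  - rewrite IHl; auto. rewrite H; auto. ring. intro; subst; auto.
Qed.

Lemma sum_f_R0_le (f g : nat -> R) N :
  (forall k, (k <= N)%nat -> f k <= g k) -> sum_f_R0 f N <= sum_f_R0 g N.
Proof.
  induction N; simpl; intro H. apply H; lia.
  apply Rplus_le_compat. apply IHN; intros; apply H; lia. apply H; lia.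
Qed.

Lemma sum_f_R0_scal (f : nat -> R) (M : R) N :
  sum_f_R0 (fun k => M * f k) N = M * sum_f_R0 f N.
Proof. induction N; simpl. ring. rewrite IHN; ring. Qed.

Section FiniteSums.
Variable A : AMAlgebra.

Definition sumA (l : list A) : A := fold_right (add A) (zero A) l.

Fixpoint sumA_f (F : nat -> A) (N : nat) : A :=
  match N with O => F O | S N' => add A (sumA_f F N') (F (S N')) end.

Lemma sumA_app l1 l2 : sumA (l1 ++ l2) = add A (sumA l1) (sumA l2).
Proof. induction l1; simpl. rewrite add0; auto. rewrite IHl1, addA; auto. Qed.

Lemma sumA_map_ext {X} (F G : X -> A) l :
  (forall x, In x l -> F x = G x) -> sumA (map F l) = sumA (map G l).
Proof. intro H; f_equal; apply map_ext_in; auto. Qed.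

Lemma sumA_map_add {X} (F G : X -> A) l :
  sumA (map (fun x => add A (F x) (G x)) l) = add A (sumA (map F l)) (sumA (map G l)).
Proof. induction l; simpl. rewrite add0; auto. rewrite IHl. apply add_swap4. Qed.

Lemma sumA_map_scal {X} c (F : X -> A) l :
  sumA (map (fun x => scal A c (F x)) l) = scal A c (sumA (map F l)).
Proof. induction l; simpl. rewrite scal_zero; auto. rewrite IHl, scalDr; auto. Qed.

Lemma sumA_map_mull {X} z (F : X -> A) l :
  sumA (map (fun x => mul A z (F x)) l) = mul A z (sumA (map F l)).
Proof. induction l; simpl. rewrite mul0r; auto. rewrite IHl, mulDr; auto. Qed.

Lemma sumA_map_mulr {X} z (F : X -> A) l :
  sumA (map (fun x => mul A (F x) z) l) = mul A (sumA (map F l)) z.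
Proof. induction l; simpl. rewrite mul0l; auto. rewrite IHl, mulDl; auto. Qed.

Lemma sumA_flat_map {X Y} (F : Y -> A) (G : X -> list Y) l :
  sumA (map F (flat_map G l)) = sumA (map (fun x => sumA (map F (G x))) l).
Proof. induction l; simpl; auto. rewrite map_app, sumA_app, IHl; auto. Qed.

Lemma sumA_zero {X} (F : X -> A) l :
  (forall x, In x l -> F x = zero A) -> sumA (map F l) = zero A.
Proof. induction l; simpl; intro H; auto. rewrite H, IHl, add0; auto. Qed.

Lemma sumA_single {X} (F : X -> A) l y :
  NoDup l -> In y l -> (forall x, In x l -> x <> y -> F x = zero A) -> sumA (map F l) = F y.
Proof.
  induction l; simpl; intros Hn Hy H. destruct Hy.
  inversion Hn; subst. destruct Hy as [<-|Hy].
  - rewrite sumA_zero, add0r; auto. intros x Hx. apply H; auto. intro; subst; auto.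
  - rewrite IHl; auto. rewrite H; auto. apply add0. intro; subst; auto.
Qed.

Lemma sn_sumA {X} i (F : X -> A) l :
  sn A i (sumA (map F l)) <= fold_right Rplus 0 (map (fun x => sn A i (F x)) l).
Proof.
  induction l; simpl. rewrite sn0; lra.
  eapply Rle_trans. apply sn_triangle. lra.
Qed.

Lemma sumA_f_ext F G N : (forall k, (k <= N)%nat -> F k = G k) -> sumA_f F N = sumA_f G N.
Proof. induction N; simpl; intro H. apply H; lia. rewrite IHN, H; auto; intros; apply H; lia. Qed.

Lemma sumA_f_add F G N :
  sumA_f (fun k => add A (F k) (G k)) N = add A (sumA_f F N) (sumA_f G N).
Proof. induction N; simpl; auto. rewrite IHN. apply add_swap4. Qed.

Lemma sumA_f_scal c F N : sumA_f (fun k => scal A c (F k)) N = scal A c (sumA_f F N).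
Proof. induction N; simpl; auto. rewrite IHN, scalDr; auto. Qed.

Lemma sumA_f_mull z F N : sumA_f (fun k => mul A z (F k)) N = mul A z (sumA_f F N).
Proof. induction N; simpl; auto. rewrite IHN, mulDr; auto. Qed.

Lemma sumA_f_mulr z F N : sumA_f (fun k => mul A (F k) z) N = mul A (sumA_f F N) z.
Proof. induction N; simpl; auto. rewrite IHN, mulDl; auto. Qed.

Lemma sumA_f_sub F G N :
  sumA_f (fun k => sub A (F k) (G k)) N = sub A (sumA_f F N) (sumA_f G N).
Proof. induction N; simpl; auto. rewrite IHN. symmetry. apply subDD. Qed.

Lemma sumA_f_shift F N : sumA_f F (S N) = add A (F O) (sumA_f (fun k => F (S k)) N).
Proof. induction N; simpl; auto. simpl in IHN. rewrite IHN, addA; auto. Qed.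

Lemma sumA_map_sumA_f {X} (F : X -> nat -> A) L N :
  sumA (map (fun x => sumA_f (F x) N) L) = sumA_f (fun k => sumA (map (fun x => F x k) L)) N.
Proof. induction N; simpl; auto. rewrite sumA_map_add, IHN; auto. Qed.

Lemma sumA_f_cauchy (F G : nat -> A) N :
  sumA_f (fun d => sumA_f (fun k => mul A (F k) (G (d - k)%nat)) d) N =
  sumA_f (fun k => mul A (F k) (sumA_f G (N - k))) N.
Proof.
  induction N. simpl; auto.
  cbn [sumA_f]. rewrite IHN, Nat.sub_diag. cbn [sumA_f].
  rewrite (sumA_f_ext (fun k => mul A (F k) (sumA_f G (S N - k)))
            (fun k => add A (mul A (F k) (sumA_f G (N - k))) (mul A (F k) (G (S N - k)%nat)))).
  2:{ intros k Hk. replace (S N - k)%nat with (S (N - k)) by lia. cbn [sumA_f]. apply mulDr. }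
  rewrite sumA_f_add, <- !addA. auto.
Qed.

Lemma sn_sumA_f i F N : sn A i (sumA_f F N) <= sum_f_R0 (fun k => sn A i (F k)) N.
Proof. induction N; simpl. lra. eapply Rle_trans. apply sn_triangle. lra. Qed.

Lemma sn_sumA_f_sub i F (b : nat -> R) m N : (m <= N)%nat ->
  (forall k, sn A i (F k) <= b k) ->
  sn A i (sub A (sumA_f F N) (sumA_f F m)) <= sum_f_R0 b N - sum_f_R0 b m.
Proof.
  intros Hm Hb. induction Hm.
  - rewrite subrr, sn0; lra.
  - cbn [sumA_f sum_f_R0].
    replace (sub A (add A (sumA_f F m0) (F (S m0))) (sumA_f F m))
      with (add A (sub A (sumA_f F m0) (sumA_f F m)) (F (S m0))).
    + eapply Rle_trans. apply sn_triangle. specialize (Hb (S m0)). lra.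
    + unfold sub. rewrite <- !addA. f_equal. apply addC.
Qed.

End FiniteSums.

Lemma conv_nil f g : conv f g [] = Cadd (Cmul (f []) (g [])) C0.
Proof. reflexivity. Qed.

Lemma conv_cons f g i w :
  conv f g (i :: w) = Cadd (Cmul (f []) (g (i :: w))) (conv (fun u => f (i :: u)) g w).
Proof.
  unfold conv. simpl length.
  change (seq 0 (S (S (length w)))) with (0%nat :: seq 1 (S (length w))).
  rewrite <- (seq_shift (S (length w)) 0). unfold Csum. cbn [map fold_right].
  rewrite map_map. reflexivity.
Qed.

Lemma conv_ext f1 f2 g v : (forall u, f1 u = f2 u) -> conv f1 g v = conv f2 g v.
Proof. intro H. unfold conv. f_equal. apply map_ext. intro k. rewrite H; auto. Qed.

Lemma conv0l f g v : (forall u, f u = C0) -> conv f g v = C0.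
Proof.
  intro H. unfold conv. induction (seq 0 (S (length v))); simpl; auto.
  rewrite IHl, H, Cmul0l. apply Cadd0l.
Qed.

Lemma conv_const_l x g v :
  conv (fun u => match u with [] => x | _ => C0 end) g v = Cmul x (g v).
Proof.
  destruct v as [|j v]. rewrite conv_nil, Cadd0r; auto.
  rewrite conv_cons, conv0l, Cadd0r; auto.
Qed.

Definition delta (w v : list nat) : C := if list_eq_dec Nat.eq_dec v w then C1 else C0.

Lemma conv_zeta_delta i w v : conv (zeta i) (delta w) v = delta (i :: w) v.
Proof.
  destruct v as [|j v].
  - rewrite conv_nil. simpl. rewrite Cmul0l, Cadd0r. unfold delta.
    destruct (list_eq_dec Nat.eq_dec [] (i :: w)); [discriminate|auto].
  - rewrite conv_cons. simpl (zeta i []). rewrite Cmul0l, Cadd0l.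
    rewrite (conv_ext _ (fun u => match u with
                                  | [] => if Nat.eq_dec j i then C1 else C0
                                  | _ => C0 end)) by (intro u; destruct u; reflexivity).
    rewrite conv_const_l. unfold delta.
    destruct (Nat.eq_dec j i) as [->|Hji].
    + rewrite Cmul1l. destruct (list_eq_dec Nat.eq_dec v w) as [E1|E1];
      destruct (list_eq_dec Nat.eq_dec (i :: v) (i :: w)) as [E|E]; auto.
      * subst; exfalso; auto.
      * exfalso; inversion E; auto.
    + rewrite Cmul0l. destruct (list_eq_dec Nat.eq_dec (j :: v) (i :: w)) as [E|E]; auto.
      inversion E; exfalso; auto.
Qed.

Section WordEvaluation.
Variable A : AMAlgebra.
Variable n : nat.
Variable a : nat -> A.

Lemma word_prod_app u v : word_prod A a (u ++ v) = mul A (word_prod A a u) (word_prod A a v).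
Proof. induction u; simpl. rewrite mul1l; auto. rewrite IHu, mulA; auto. Qed.

Definition eval_layer (c : list nat -> C) (d : nat) : A :=
  sumA A (map (fun w => scal A (c w) (word_prod A a w)) (words n d)).

Definition eval_partial (c : list nat -> C) (N : nat) : A := sumA_f A (eval_layer c) N.

Lemma eval_layer_ext c1 c2 d :
  (forall w, In w (words n d) -> c1 w = c2 w) -> eval_layer c1 d = eval_layer c2 d.
Proof. intro H; apply sumA_map_ext. intros w Hw; rewrite H; auto. Qed.

Lemma eval_partial_ext c1 c2 N : (forall w, c1 w = c2 w) -> eval_partial c1 N = eval_partial c2 N.
Proof. intro H. apply sumA_f_ext. intros k _. apply eval_layer_ext. intros; apply H. Qed.

Lemma eval_layer_add c1 c2 d :
  eval_layer (fun w => Cadd (c1 w) (c2 w)) d = add A (eval_layer c1 d) (eval_layer c2 d).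
Proof. unfold eval_layer. rewrite <- sumA_map_add. apply sumA_map_ext. intros; apply scalDl. Qed.

Lemma eval_layer_scal l c d :
  eval_layer (fun w => Cmul l (c w)) d = scal A l (eval_layer c d).
Proof. unfold eval_layer. rewrite <- sumA_map_scal. apply sumA_map_ext. intros; apply scalA. Qed.

Lemma eval_layer_zero c d :
  (forall w, In w (words n d) -> c w = C0) -> eval_layer c d = zero A.
Proof. intro H. apply sumA_zero. intros w Hw. rewrite H; auto. apply scal0. Qed.

Lemma eval_layer_0 c : eval_layer c 0 = scal A (c []) (one A).
Proof. apply add0r. Qed.

Lemma eval_layer_S c d :
  eval_layer c (S d) =
  sumA A (map (fun i => mul A (a i) (eval_layer (fun u => c (i :: u)) d)) (seq 0 n)).
Proof.
  unfold eval_layer. simpl words. rewrite sumA_flat_map. apply sumA_map_ext. intros i _.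
  rewrite map_map, <- sumA_map_mull. apply sumA_map_ext. intros w _. apply scalMr.
Qed.

Lemma eval_layer_conv f g d :
  eval_layer (conv f g) d = sumA_f A (fun k => mul A (eval_layer f k) (eval_layer g (d - k))) d.
Proof.
  revert f; induction d; intro f.
  - simpl. rewrite !eval_layer_0, conv_nil, scalDl, scal0, add0r, scalA, <- scalMl, mul1l.
    auto.
  - rewrite sumA_f_shift, eval_layer_S. simpl (S d - 0)%nat.
    rewrite (sumA_map_ext A _ (fun i =>
      add A (mul A (a i) (scal A (f []) (eval_layer (fun u => g (i :: u)) d)))
            (mul A (a i) (sumA_f A (fun k => mul A (eval_layer (fun u => f (i :: u)) k)
                                                   (eval_layer g (d - k))) d)))).
    2:{ intros i _. rewrite <- IHd, <- mulDr, <- eval_layer_scal, <- eval_layer_add.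
        f_equal. apply eval_layer_ext. intros; apply conv_cons. }
    rewrite sumA_map_add. f_equal.
    + rewrite eval_layer_0, (eval_layer_S g), <- scalMl, mul1l, <- sumA_map_scal.
      apply sumA_map_ext. intros; symmetry; apply scalMr.
    + rewrite (sumA_map_ext A _ (fun i => sumA_f A (fun k => mul A (a i)
                 (mul A (eval_layer (fun u => f (i :: u)) k) (eval_layer g (d - k)))) d))
        by (intros; rewrite sumA_f_mull; auto).
      rewrite sumA_map_sumA_f. apply sumA_f_ext. intros k _.
      rewrite eval_layer_S, <- sumA_map_mulr. apply sumA_map_ext. intros; apply mulA.
Qed.

Lemma eval_partial_conv f g N :
  sub A (mul A (eval_partial f N) (eval_partial g N)) (eval_partial (conv f g) N) =
  sumA_f A (fun k => mul A (eval_layer f k) (sub A (eval_partial g N) (eval_partial g (N - k)))) N.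
Proof.
  unfold eval_partial at 3.
  rewrite (sumA_f_ext A _ (fun d => sumA_f A (fun k =>
             mul A (eval_layer f k) (eval_layer g (d - k))) d)) by (intros; apply eval_layer_conv).
  rewrite sumA_f_cauchy. unfold eval_partial at 1.
  rewrite <- sumA_f_mulr, <- sumA_f_sub. apply sumA_f_ext. intros; apply subMr.
Qed.

Definition geometric_word_bound (q : A -> R) (rho M : R) : Prop :=
  forall d w, In w (words n d) -> q (word_prod A a w) <= M * rho ^ d.

Section Bounded.
Variables (i : idx A) (rho M : R).
Hypothesis bound : geometric_word_bound (sn A i) rho M.

Lemma sn_eval_layer c d : sn A i (eval_layer c d) <= M * layer n c rho d.
Proof.
  unfold eval_layer, layer. eapply Rle_trans. apply sn_sumA.
  rewrite <- lsum_scal. apply lsum_le. intros w Hw. rewrite sn_homog.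
  specialize (bound d w Hw). pose proof (Cnorm_ge0 (c w)).
  replace (M * (Cnorm (c w) * rho ^ d)) with (Cnorm (c w) * (M * rho ^ d)) by ring.
  apply Rmult_le_compat_l; auto.
Qed.

Lemma sn_eval_partial c N : sn A i (eval_partial c N) <= M * norm_partial n c rho N.
Proof.
  eapply Rle_trans. apply sn_sumA_f.
  unfold norm_partial. rewrite <- sum_f_R0_scal. apply sum_f_R0_le. intros k _.
  apply sn_eval_layer.
Qed.

Lemma sn_eval_partial_sub c m N : (m <= N)%nat ->
  sn A i (sub A (eval_partial c N) (eval_partial c m)) <=
  M * (norm_partial n c rho N - norm_partial n c rho m).
Proof.
  intro Hm. eapply Rle_trans.
  - apply (sn_sumA_f_sub A i _ (fun k => M * layer n c rho k)); auto. apply sn_eval_layer.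
  - rewrite !sum_f_R0_scal. unfold norm_partial. lra.
Qed.

End Bounded.
End WordEvaluation.

Section SequentialLimits.
Variable A : AMAlgebra.

Definition Un_cvA (x : nat -> A) (l : A) : Prop :=
  forall i eps, 0 < eps ->
    exists N0, forall N, (N0 <= N)%nat -> sn A i (sub A (x N) l) < eps.

Lemma eq_of_sn_sub_small (x y : A) :
  (forall i eps, 0 < eps -> sn A i (sub A x y) < eps) -> x = y.
Proof.
  intro H. apply sub_eq0, hausdorff. intro i.
  pose proof (sn_nonneg A i (sub A x y)).
  destruct (Req_dec (sn A i (sub A x y)) 0) as [E|E]; auto.
  specialize (H i (sn A i (sub A x y) / 2)). lra.
Qed.

Lemma Un_cvA_unique x l1 l2 : Un_cvA x l1 -> Un_cvA x l2 -> l1 = l2.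
Proof.
  intros H1 H2. apply eq_of_sn_sub_small. intros i eps He.
  destruct (H1 i (eps/2)) as [N1 HN1]; [lra|]. destruct (H2 i (eps/2)) as [N2 HN2]; [lra|].
  specialize (HN1 (N1 + N2)%nat ltac:(lia)). specialize (HN2 (N1 + N2)%nat ltac:(lia)).
  eapply Rle_lt_trans. apply (sn_sub_triangle A i _ (x (N1 + N2)%nat)).
  rewrite sn_subC. lra.
Qed.

Lemma Un_cvA_cauchy (x : nat -> A) :
  (forall i eps, 0 < eps -> exists N0, forall N M, (N0 <= N)%nat -> (N0 <= M)%nat ->
      sn A i (sub A (x N) (x M)) < eps) -> exists l, Un_cvA x l.
Proof.
  intro H. destruct (complete A nat le x) as [l Hl]; eauto.
  split; [constructor; exact O|]. split; [intros; lia|]. split; [intros; lia|].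
  intros u v; exists (u + v)%nat; lia.
Qed.

Lemma Un_cvA_close (x y : nat -> A) l : Un_cvA x l ->
  (forall i eps, 0 < eps ->
     exists N0, forall N, (N0 <= N)%nat -> sn A i (sub A (y N) (x N)) < eps) ->
  Un_cvA y l.
Proof.
  intros Hx Hy i eps He.
  destruct (Hx i (eps/2)) as [N1 HN1]; [lra|]. destruct (Hy i (eps/2)) as [N2 HN2]; [lra|].
  exists (N1 + N2)%nat. intros N HN.
  specialize (HN1 N ltac:(lia)). specialize (HN2 N ltac:(lia)).
  eapply Rle_lt_trans. apply (sn_sub_triangle A i _ (x N)). lra.
Qed.

Lemma Un_cvA_eventually_eq (x y : nat -> A) l : Un_cvA x l ->
  (exists N0, forall N, (N0 <= N)%nat -> y N = x N) -> Un_cvA y l.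
Proof.
  intros Hx [N0 H]. apply (Un_cvA_close x); auto. intros i eps He. exists N0. intros N HN.
  rewrite H, subrr, sn0; auto.
Qed.

Lemma Un_cvA_const (l : A) : Un_cvA (fun _ => l) l.
Proof. intros i eps He. exists O. intros. rewrite subrr, sn0; auto. Qed.

Lemma Un_cvA_add x y l m :
  Un_cvA x l -> Un_cvA y m -> Un_cvA (fun N => add A (x N) (y N)) (add A l m).
Proof.
  intros Hx Hy i eps He.
  destruct (Hx i (eps/2)) as [N1 HN1]; [lra|]. destruct (Hy i (eps/2)) as [N2 HN2]; [lra|].
  exists (N1 + N2)%nat. intros N HN.
  specialize (HN1 N ltac:(lia)). specialize (HN2 N ltac:(lia)).
  rewrite subDD. eapply Rle_lt_trans. apply sn_triangle. lra.
Qed.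

Lemma Un_cvA_scal c x l : Un_cvA x l -> Un_cvA (fun N => scal A c (x N)) (scal A c l).
Proof.
  intros Hx i eps He. pose proof (Cnorm_ge0 c).
  destruct (Hx i (eps / (Cnorm c + 1))) as [N1 HN1]; [apply Rdiv_lt_0_compat; lra|].
  exists N1. intros N HN. rewrite subZ, sn_homog. specialize (HN1 N HN).
  pose proof (sn_nonneg A i (sub A (x N) l)).
  apply Rmult_lt_compat_l with (r := Cnorm c + 1) in HN1; [|lra].
  field_simplify in HN1; [|lra]. nra.
Qed.

Lemma Un_cvA_mul x y l m :
  Un_cvA x l -> Un_cvA y m -> Un_cvA (fun N => mul A (x N) (y N)) (mul A l m).
Proof.
  intros Hx Hy i eps He.
  set (K := sn A i m + sn A i l + 2).
  pose proof (sn_nonneg A i m). pose proof (sn_nonneg A i l).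
  set (de := Rmin 1 (eps / K)).
  assert (Hde : 0 < de) by (apply Rmin_pos; [lra|apply Rdiv_lt_0_compat; unfold K; lra]).
  assert (HdeK : de * K <= eps).
  { assert (de <= eps / K) by apply Rmin_r.
    apply Rmult_le_compat_r with (r := K) in H1; [|unfold K; lra].
    field_simplify in H1; unfold K in *; lra. }
  assert (de <= 1) by apply Rmin_l.
  destruct (Hx i de Hde) as [N1 HN1]. destruct (Hy i de Hde) as [N2 HN2].
  exists (N1 + N2)%nat. intros N HN. specialize (HN1 N ltac:(lia)). specialize (HN2 N ltac:(lia)).
  replace (sub A (mul A (x N) (y N)) (mul A l m))
    with (add A (mul A (sub A (x N) l) (y N)) (mul A l (sub A (y N) m))).
  2:{ rewrite <- subMl, <- subMr. unfold sub.
      rewrite <- addA, (addA A (opp A (mul A l (y N)))), addNl, add0; auto. }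
  assert (Hy' : sn A i (y N) <= sn A i m + 1).
  { rewrite <- (subKr A (y N) m). eapply Rle_trans. apply sn_triangle. lra. }
  eapply Rle_lt_trans. apply sn_triangle.
  pose proof (sn_submult A i (sub A (x N) l) (y N)).
  pose proof (sn_submult A i l (sub A (y N) m)).
  pose proof (sn_nonneg A i (sub A (x N) l)). pose proof (sn_nonneg A i (y N)).
  apply Rle_lt_trans with (de * (sn A i m + 1) + sn A i l * de); [|unfold K in *; nra].
  apply Rplus_le_compat.
  - eapply Rle_trans; [eassumption|]. apply Rmult_le_compat; lra.
  - eapply Rle_trans; [eassumption|]. apply Rmult_le_compat_l; lra.
Qed.

Lemma sn_le_of_Un_cvA x l i B : Un_cvA x l -> (forall N, sn A i (x N) <= B) -> sn A i l <= B.
Proof.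
  intros Hx HB. apply Rnot_lt_le. intro Hlt.
  destruct (Hx i (sn A i l - B)) as [N HN]; [lra|]. specialize (HN N (le_n _)).
  rewrite sn_subC in HN.
  pose proof (sn_triangle A i (sub A l (x N)) (x N)) as H. rewrite subKr in H.
  specialize (HB N). lra.
Qed.

End SequentialLimits.

Lemma layer_ge0 n c rho d : 0 <= rho -> 0 <= layer n c rho d.
Proof.
  intro H. apply lsum_ge0. intros. apply Rmult_le_pos. apply Cnorm_ge0. apply pow_le; auto.
Qed.

Lemma norm_partial_ge0 n c rho N : 0 <= rho -> 0 <= norm_partial n c rho N.
Proof. intro Hr. apply cond_pos_sum. intro; apply layer_ge0; auto. Qed.

Lemma norm_partial_le_lim n c rho s N :
  0 <= rho -> Un_cv (norm_partial n c rho) s -> norm_partial n c rho N <= s.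
Proof.
  intros Hr Hc. apply growing_ineq; auto. intro k. unfold norm_partial. simpl.
  pose proof (layer_ge0 n c rho (S k) Hr). lra.
Qed.

Lemma norm_partial_sub_lt n c rho s eps N0 m N :
  (forall k, (N0 <= k)%nat -> Rdist (norm_partial n c rho k) s < eps) ->
  (N0 <= m)%nat -> (N0 <= N)%nat ->
  norm_partial n c rho N - norm_partial n c rho m < 2 * eps.
Proof.
  intros H Hm HN. pose proof (H m Hm). pose proof (H N HN). unfold Rdist in *.
  pose proof (Rle_abs (norm_partial n c rho N - s)).
  pose proof (Rle_abs (- (norm_partial n c rho m - s))). rewrite Rabs_Ropp in *. lra.
Qed.

Lemma sum_f_R0_split (a : nat -> R) K N : (K <= N)%nat ->
  sum_f_R0 (fun k => if Compare_dec.le_lt_dec k K then 0 else a k) N =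
  sum_f_R0 a N - sum_f_R0 a K.
Proof.
  intro H. induction H.
  - assert (forall m, (m <= K)%nat ->
              sum_f_R0 (fun k => if Compare_dec.le_lt_dec k K then 0 else a k) m = 0).
    { induction m; intro Hm; cbn [sum_f_R0].
      - destruct (Compare_dec.le_lt_dec 0 K); [lra|lia].
      - rewrite IHm by lia. destruct (Compare_dec.le_lt_dec (S m) K); [lra|lia]. }
    rewrite H by lia. ring.
  - cbn [sum_f_R0]. rewrite IHle. destruct (Compare_dec.le_lt_dec (S m) K); [lia|]. ring.
Qed.

Lemma conv_summable_null_cv0 (a t : nat -> R) Sa B :
  (forall k, 0 <= a k) -> Un_cv (fun N => sum_f_R0 a N) Sa ->
  (forall m, 0 <= t m <= B) -> Un_cv t 0 ->
  Un_cv (fun N => sum_f_R0 (fun k => a k * t (N - k)%nat) N) 0.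
Proof.
  intros Ha HS Ht Ht0 eps He.
  assert (HSn : forall N, sum_f_R0 a N <= Sa).
  { apply growing_ineq; auto. intro k; simpl. specialize (Ha (S k)). lra. }
  assert (HB : 0 <= B) by (specialize (Ht O); lra).
  assert (HS0 : 0 <= Sa) by (specialize (HSn O); simpl in HSn; specialize (Ha O); lra).
  set (e1 := eps / (2 * (Sa + 1))). set (e2 := eps / (2 * (B + 1))).
  assert (He1 : 0 < e1) by (apply Rdiv_lt_0_compat; lra).
  assert (He2 : 0 < e2) by (apply Rdiv_lt_0_compat; lra).
  destruct (Ht0 e1 He1) as [m0 Hm0]. destruct (HS e2 He2) as [K HK].
  exists (K + m0)%nat. intros N HN. unfold Rdist. rewrite Rminus_0_r.
  rewrite Rabs_right.
  2:{ apply Rle_ge, cond_pos_sum. intro k. apply Rmult_le_pos; auto. apply Ht. }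
  (* Terms with k <= K have t (N - k) < e1; the others are summed against a small tail of a. *)
  apply Rle_lt_trans with
    (e1 * sum_f_R0 a N +
     B * sum_f_R0 (fun k => if Compare_dec.le_lt_dec k K then 0 else a k) N).
  - rewrite <- !sum_f_R0_scal, <- plus_sum. apply sum_f_R0_le. intros k Hk.
    pose proof (Ht (N - k)%nat). specialize (Ha k).
    destruct (Compare_dec.le_lt_dec k K); [|nra].
    specialize (Hm0 (N - k)%nat ltac:(lia)). unfold Rdist in Hm0.
    rewrite Rminus_0_r, Rabs_right in Hm0 by lra. nra.
  - rewrite sum_f_R0_split by lia.
    specialize (HK K (le_n _)). unfold Rdist in HK.
    rewrite Rabs_left1 in HK by (apply Rle_minus; auto).
    specialize (HSn N).
    assert (e1 * sum_f_R0 a N <= e1 * Sa) by (apply Rmult_le_compat_l; lra).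
    assert (B * (sum_f_R0 a N - sum_f_R0 a K) <= B * e2) by (apply Rmult_le_compat_l; lra).
    assert (e1 * Sa < eps / 2).
    { unfold e1. apply Rmult_lt_reg_r with (2 * (Sa + 1)); [lra|]. field_simplify; lra. }
    assert (B * e2 < eps / 2).
    { unfold e2. apply Rmult_lt_reg_r with (2 * (B + 1)); [lra|]. field_simplify; lra. }
    lra.
Qed.

Lemma rootn_ge0 m x : 0 <= rootn m x.
Proof. unfold rootn. destruct (Rle_dec x 0). lra. left; apply exp_pos. Qed.

Lemma rootn_pow m x : 0 < x -> (1 <= m)%nat -> rootn m x ^ m = x.
Proof.
  intros Hx Hm. unfold rootn. destruct (Rle_dec x 0). lra.
  rewrite <- Rpower_pow by apply exp_pos. rewrite Rpower_mult, Rinv_l.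
  - apply Rpower_1; auto.
  - apply not_0_INR; lia.
Qed.

Lemma rootn_le m x y : 0 < y -> (1 <= m)%nat -> x <= y ^ m -> rootn m x <= y.
Proof.
  intros Hy Hm Hx. unfold rootn. destruct (Rle_dec x 0). lra.
  assert (Hroot : Rpower (y ^ m) (/ INR m) = y).
  { rewrite <- Rpower_pow, Rpower_mult, Rinv_r by (auto; apply not_0_INR; lia).
    apply Rpower_1; auto. }
  rewrite <- Hroot. apply Rle_Rpower_l.
  - left; apply Rinv_0_lt_compat, lt_0_INR; lia.
  - split; lra.
Qed.

Lemma le_pow_of_rootn_le m x y : 0 <= y -> (1 <= m)%nat -> rootn m x <= y -> x <= y ^ m.
Proof.
  intros Hy Hm H. destruct (Rle_dec x 0). pose proof (pow_le y m Hy); lra.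
  rewrite <- (rootn_pow m x) by (auto; lra). apply pow_incr. split; auto. apply rootn_ge0.
Qed.

Lemma pow_le_of_le_rootn m x y : 0 < y -> (1 <= m)%nat -> y <= rootn m x -> y ^ m <= x.
Proof.
  intros Hy Hm H. destruct (Rle_dec x 0).
  - unfold rootn in H. destruct (Rle_dec x 0); [lra|contradiction].
  - rewrite <- (rootn_pow m x) by (auto; lra). apply pow_incr. lra.
Qed.

Lemma pow_le_pow_le1 x s m : 0 < x <= 1 -> (s <= m)%nat -> x ^ m <= x ^ s.
Proof.
  intros Hx Hs. replace m with (s + (m - s))%nat by lia. rewrite pow_add.
  pose proof (pow_le x s ltac:(lra)). pose proof (pow_le x (m - s) ltac:(lra)).
  assert (x ^ (m - s) <= 1) by (rewrite <- (pow1 (m - s)); apply pow_incr; lra).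
  nra.
Qed.

Lemma rootn_infimum (w : nat -> R) : exists L, 0 <= L /\
  (forall m, (1 <= m)%nat -> L <= rootn m (w m)) /\
  (forall eps, 0 < eps -> exists m, (1 <= m)%nat /\ rootn m (w m) < L + eps).
Proof.
  set (E := fun x => exists m, x = - rootn (S m) (w (S m))).
  assert (HE : forall x, E x -> x <= 0).
  { intros x [m ->]. pose proof (rootn_ge0 (S m) (w (S m))). lra. }
  destruct (completeness E) as [g [Hg1 Hg2]].
  - exists 0. exact HE.
  - exists (- rootn 1 (w 1%nat)). exists O; auto.
  - exists (- g). split; [|split].
    + assert (g <= 0) by (apply Hg2; exact HE). lra.
    + intros m Hm. destruct m; [lia|].
      assert (- rootn (S m) (w (S m)) <= g) by (apply Hg1; exists m; auto). lra.
    + intros eps He. apply NNPP. intro Hn.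
      assert (g <= g - eps); [|lra].
      apply Hg2. intros x [m ->]. apply Rnot_lt_le. intro Hlt.
      apply Hn. exists (S m). split; [lia|lra].
Qed.

Lemma sum_f_R0_ge_term (f : nat -> R) k N :
  (forall m, 0 <= f m) -> (k <= N)%nat -> f k <= sum_f_R0 f N.
Proof.
  intros Hf Hk. induction Hk.
  - destruct k; simpl. lra. pose proof (cond_pos_sum f k Hf). lra.
  - simpl. specialize (Hf (S m)). lra.
Qed.

Section Submultiplicative.
Variable w : nat -> R.
Hypothesis w_ge0 : forall m, 0 <= w m.
Hypothesis w_submult :
  forall p q, (1 <= p)%nat -> (1 <= q)%nat -> w (p + q)%nat <= w p * w q.

Lemma submult_iter_bound m z W :
  0 <= z -> w m <= z ^ m -> (forall s, (1 <= s <= m)%nat -> w s <= W) ->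
  forall q s, (1 <= s <= m)%nat -> w (q * m + s)%nat <= z ^ (q * m) * W.
Proof.
  intros Hz Hwm HW. induction q; intros s Hs.
  - simpl. rewrite Rmult_1_l. apply HW; auto.
  - replace (S q * m + s)%nat with (m + (q * m + s))%nat by lia.
    eapply Rle_trans. apply w_submult; lia.
    replace (S q * m)%nat with (m + q * m)%nat by lia. rewrite pow_add, Rmult_assoc.
    apply Rmult_le_compat; auto.
Qed.

(* With D = q m + s and 1 <= s <= m, w D <= z^(q m) W, and (y/z)^(q m) eventually beats
   W / min(1,y)^m. *)
Lemma submult_eventually_le_pow m z y :
  (1 <= m)%nat -> 0 < z < y -> w m <= z ^ m ->
  exists D0, forall D, (D0 <= D)%nat -> w D <= y ^ D.
Proof.
  intros Hm Hzy Hwm.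
  set (W := sum_f_R0 w m + 1).
  assert (HW : forall s, (1 <= s <= m)%nat -> w s <= W).
  { intros s Hs. pose proof (sum_f_R0_ge_term w s m w_ge0 ltac:(lia)). unfold W; lra. }
  set (c := Rmin 1 y ^ m).
  assert (Hmin : 0 < Rmin 1 y) by (apply Rmin_pos; lra).
  assert (Hc : 0 < c) by (apply pow_lt; auto).
  assert (Hys : forall s, (s <= m)%nat -> c <= y ^ s).
  { intros s Hs. eapply Rle_trans.
    - apply pow_le_pow_le1; eauto. split; auto. apply Rmin_l.
    - apply pow_incr. split; [lra|apply Rmin_r]. }
  set (lam := y / z).
  assert (Hlam : 1 < lam) by (apply Rmult_lt_reg_r with z; [lra|]; unfold lam; field_simplify; lra).
  destruct (Pow_x_infinity lam ltac:(rewrite Rabs_right; lra) (W / c)) as [Q HQ].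
  exists (Q * m + m)%nat. intros D HD.
  set (q := ((D - 1) / m)%nat). set (s := ((D - 1) mod m + 1)%nat).
  pose proof (Nat.div_mod_eq (D - 1) m). pose proof (Nat.mod_upper_bound (D - 1) m ltac:(lia)).
  assert (Hs : (1 <= s <= m)%nat) by (unfold s; lia).
  assert (HqQ : (Q <= q)%nat) by (apply Nat.div_le_lower_bound; nia).
  assert (HDe : D = (q * m + s)%nat) by (unfold s, q in *; lia).
  rewrite HDe. eapply Rle_trans. apply (submult_iter_bound m z W); auto; lra.
  specialize (HQ (q * m)%nat ltac:(nia)).
  rewrite Rabs_right in HQ by (apply Rle_ge, pow_le; lra).
  assert (Hy : y = z * lam) by (unfold lam; field; lra).
  assert (W <= lam ^ (q * m) * c).
  { apply Rmult_le_reg_r with (/ c). apply Rinv_0_lt_compat; auto.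
    rewrite Rmult_assoc, Rinv_r by lra. unfold Rdiv in HQ. lra. }
  pose proof (pow_le z (q * m) ltac:(lra)). pose proof (pow_le lam (q * m) ltac:(lra)).
  specialize (Hys s ltac:(lia)).
  rewrite pow_add.
  replace (y ^ (q * m)) with (z ^ (q * m) * lam ^ (q * m)) by (rewrite Hy, Rpow_mult_distr; auto).
  rewrite Rmult_assoc. apply Rmult_le_compat_l; auto.
  apply Rle_trans with (lam ^ (q * m) * c); auto. apply Rmult_le_compat_l; auto.
Qed.

Lemma fekete : exists L, 0 <= L /\ Un_cv (fun d => rootn (S d) (w (S d))) L /\
  (forall m, (1 <= m)%nat -> L <= rootn m (w m)).
Proof.
  destruct (rootn_infimum w) as [L [HL0 [HLv Happ]]].
  exists L. split; auto. split; auto.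
  intros eps He.
  destruct (Happ (eps/4)) as [m [Hm1 Hvm]]; [lra|].
  assert (Hwm : w m <= (L + eps/4) ^ m) by (apply le_pow_of_rootn_le; auto; lra).
  destruct (submult_eventually_le_pow m (L + eps/4) (L + eps/2)) as [D0 HD0]; auto; [lra|].
  exists D0. intros d Hd. unfold Rdist.
  assert (rootn (S d) (w (S d)) <= L + eps/2) by (apply rootn_le; [lra|lia|apply HD0; lia]).
  assert (L <= rootn (S d) (w (S d))) by (apply HLv; lia).
  rewrite Rabs_right; lra.
Qed.

End Submultiplicative.

Lemma rootn_infimum_le_rate (w : nat -> R) L M rho :
  0 < rho -> (forall m, (1 <= m)%nat -> L <= rootn m (w m)) ->
  (forall m, (1 <= m)%nat -> w m <= M * rho ^ m) -> L <= rho.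
Proof.
  intros Hr HL Hw. apply Rnot_lt_le. intro Hlt.
  set (lam := L / rho).
  assert (Hlam : 1 < lam)
    by (unfold lam; apply Rmult_lt_reg_r with rho; auto; field_simplify; lra).
  destruct (Pow_x_infinity lam ltac:(rewrite Rabs_right; lra) (M + 1)) as [Q HQ].
  specialize (HQ (S Q) ltac:(lia)). rewrite Rabs_right in HQ by (apply Rle_ge, pow_le; lra).
  assert (HLw : L ^ S Q <= w (S Q)) by (apply pow_le_of_le_rootn; try lra; try lia; apply HL; lia).
  specialize (Hw (S Q) ltac:(lia)).
  assert (L = lam * rho) by (unfold lam; field; lra).
  rewrite H, Rpow_mult_distr in HLw.
  pose proof (pow_lt rho (S Q) Hr). nra.
Qed.

Definition restrict (L : list (list nat)) (c : list nat -> C) (v : list nat) : C :=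
  if in_dec (list_eq_dec Nat.eq_dec) v L then c v else C0.

Definition truncate (N : nat) (c : list nat -> C) (v : list nat) : C :=
  if Compare_dec.le_dec (length v) N then c v else C0.

Definition tail (N : nat) (c : list nat -> C) (v : list nat) : C :=
  if Compare_dec.le_dec (length v) N then C0 else c v.

Lemma layer_tail n c rho N k :
  layer n (tail N c) rho k = if Compare_dec.le_dec k N then 0 else layer n c rho k.
Proof.
  unfold layer. destruct (Compare_dec.le_dec k N).
  - apply lsum_zero. intros w Hw. apply words_spec in Hw. unfold tail.
    destruct (Compare_dec.le_dec (length w) N); [|lia]. rewrite Cnorm_C0; ring.
  - f_equal. apply map_ext_in. intros w Hw. apply words_spec in Hw. unfold tail.
    destruct (Compare_dec.le_dec (length w) N); [lia|auto].
Qed.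

Lemma norm_partial_tail n c rho N M : (N <= M)%nat ->
  norm_partial n (tail N c) rho M = norm_partial n c rho M - norm_partial n c rho N.
Proof.
  intro HM. induction HM.
  - assert (H0 : forall m, (m <= N)%nat -> norm_partial n (tail N c) rho m = 0).
    { induction m; intro Hm; unfold norm_partial in *; cbn [sum_f_R0]; rewrite layer_tail.
      - destruct (Compare_dec.le_dec 0 N); [auto|lia].
      - rewrite IHm by lia. destruct (Compare_dec.le_dec (S m) N); [ring|lia]. }
    rewrite H0 by lia. ring.
  - unfold norm_partial in *. cbn [sum_f_R0]. rewrite IHHM, layer_tail.
    destruct (Compare_dec.le_dec (S m) N); [lia|ring].
Qed.

Lemma norm_partial_tail_cv n c N rho s :
  Un_cv (norm_partial n c rho) s ->
  Un_cv (norm_partial n (tail N c) rho) (s - norm_partial n c rho N).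
Proof.
  intros Hs eps He. destruct (Hs eps He) as [N0 HN0]. exists (N + N0)%nat. intros M HM.
  unfold Rdist. rewrite norm_partial_tail by lia. specialize (HN0 M ltac:(lia)).
  unfold Rdist in HN0.
  replace (norm_partial n c rho M - norm_partial n c rho N - (s - norm_partial n c rho N))
    with (norm_partial n c rho M - s) by ring. auto.
Qed.

Section FiniteSupport.
Variables (n : nat) (r : R).

Lemma in_FT_finite c N :
  (forall w, ~ Forall (fun i => (i < n)%nat) w -> c w = C0) ->
  (forall w, (N < length w)%nat -> c w = C0) -> in_FT n r c.
Proof.
  intros H1 H2. split; auto. intros rho Hrho. exists (norm_partial n c rho N).
  intros eps He. exists N. intros k Hk. unfold Rdist.
  assert (Hlay : forall d, (N < d)%nat -> layer n c rho d = 0).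
  { intros d Hd. apply lsum_zero. intros w Hw. apply words_spec in Hw.
    rewrite H2 by lia. rewrite Cnorm_C0; ring. }
  assert (norm_partial n c rho k = norm_partial n c rho N).
  { induction Hk; auto. unfold norm_partial in *. simpl. rewrite IHHk, Hlay by lia. ring. }
  rewrite H, Rminus_diag, Rabs_R0; auto.
Qed.

Lemma delta_in_FT w : Forall (fun i => (i < n)%nat) w -> in_FT n r (delta w).
Proof.
  intro Hw. apply (in_FT_finite _ (length w)); intros v Hv; unfold delta;
    destruct (list_eq_dec Nat.eq_dec v w); subst; auto; [contradiction|lia].
Qed.

Lemma zeta_in_FT i : (i < n)%nat -> in_FT n r (zeta i).
Proof.
  intro Hi. apply (in_FT_finite _ 1); intros v Hv; destruct v as [|k [|k' v]]; simpl in *; auto.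
  - destruct (Nat.eq_dec k i); auto. subst. exfalso; apply Hv. constructor; auto.
  - lia.
Qed.

Lemma restrict_in_FT c L N :
  (forall w, In w L -> Forall (fun i => (i < n)%nat) w /\ (length w <= N)%nat) ->
  in_FT n r (restrict L c).
Proof.
  intro HL. apply (in_FT_finite _ N); intros v Hv; unfold restrict;
    destruct (in_dec (list_eq_dec Nat.eq_dec) v L) as [I|I]; auto; exfalso.
  - apply Hv, HL; auto.
  - pose proof (HL v I). lia.
Qed.

Lemma truncate_in_FT c N :
  (forall w, ~ Forall (fun i => (i < n)%nat) w -> c w = C0) -> in_FT n r (truncate N c).
Proof.
  intro Hc. apply (in_FT_finite _ N); intros v Hv; unfold truncate;
    destruct (Compare_dec.le_dec (length v) N); auto; lia.
Qed.

Lemma tail_in_FT (f : FT n r) N : in_FT n r (tail N (coef f)).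
Proof.
  destruct f as [c [Hc Hs]]. unfold coef; simpl. split.
  - intros w Hw. unfold tail. destruct (Compare_dec.le_dec (length w) N); auto.
  - intros rho Hrho. destruct (Hs rho Hrho) as [s Hs']. eexists.
    apply norm_partial_tail_cv; eauto.
Qed.

End FiniteSupport.

Section ContinuousHomomorphisms.
Variables (A : AMAlgebra) (n : nat) (r : R) (g : FT n r -> A) (b : nat -> A).
Hypothesis g_hom : cont_hom A n r g.
Hypothesis g_gens : maps_gens A n r g b.

Lemma hom_zero (h : FT n r) : (forall w, coef h w = C0) -> g h = zero A.
Proof.
  intro H. destruct g_hom as [Hadd _]. apply idem_zero. apply Hadd.
  intro w. rewrite H. symmetry; apply Cadd0l.
Qed.

Lemma hom_delta w : Forall (fun i => (i < n)%nat) w ->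
  forall h : FT n r, (forall v, coef h v = delta w v) -> g h = word_prod A b w.
Proof.
  induction w as [|i w IH]; intros Hw h Hh.
  - destruct g_hom as [_ [_ [_ [Hone _]]]]. apply Hone. intro v. rewrite Hh.
    unfold delta. destruct v; destruct (list_eq_dec Nat.eq_dec _ _); auto; congruence.
  - inversion Hw; subst.
    destruct g_hom as [_ [_ [Hmul _]]].
    rewrite (Hmul (exist _ _ (zeta_in_FT n r i H1)) (exist _ _ (delta_in_FT n r w H2)) h).
    + simpl. f_equal; [apply g_gens|apply IH]; auto.
    + intro v. rewrite Hh. symmetry; apply conv_zeta_delta.
Qed.

Lemma restrict_cons c x L v :
  ~ In x L ->
  restrict (x :: L) c v = Cadd (restrict L c v) (Cmul (c x) (delta x v)).
Proof.
  intro Hx. unfold restrict, delta.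
  destruct (list_eq_dec Nat.eq_dec v x) as [->|Hvx].
  - destruct (in_dec _ x (x :: L)) as [_|I]; [|exfalso; apply I; left; auto].
    destruct (in_dec _ x L); [contradiction|]. rewrite Cadd0l, Cmul1r; auto.
  - rewrite Cmul0r, Cadd0r.
    destruct (in_dec _ v (x :: L)) as [[E|I1]|I1]; destruct (in_dec _ v L) as [I2|I2];
      auto; subst; try contradiction.
    exfalso; apply I1; right; auto.
Qed.

Lemma hom_restrict (c : list nat -> C) N L : NoDup L ->
  (forall w, In w L -> Forall (fun i => (i < n)%nat) w /\ (length w <= N)%nat) ->
  forall h : FT n r, (forall v, coef h v = restrict L c v) ->
  g h = sumA A (map (fun w => scal A (c w) (word_prod A b w)) L).
Proof.
  induction L as [|x L IH]; intros HL HLw h Hh.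
  - apply hom_zero. intro v. rewrite Hh. reflexivity.
  - inversion HL; subst. destruct (HLw x (or_introl eq_refl)) as [Hx Hxl].
    assert (HLw' : forall w, In w L ->
                     Forall (fun i => (i < n)%nat) w /\ (length w <= N)%nat)
      by (intros; apply HLw; right; auto).
    assert (F2 : in_FT n r (fun v => Cmul (c x) (delta x v))).
    { apply (in_FT_finite n r _ N); intros v Hv; unfold delta;
        destruct (list_eq_dec Nat.eq_dec v x); subst; try apply Cmul0r; exfalso; auto; lia. }
    destruct g_hom as [Hadd [Hscal _]].
    rewrite (Hadd (exist _ _ (restrict_in_FT n r c L N HLw')) (exist _ _ F2) h).
    + simpl. rewrite addC. f_equal; [|apply IH; auto].
      rewrite (Hscal (c x) (exist _ _ (delta_in_FT n r x Hx))) by auto.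
      f_equal. apply hom_delta; auto.
    + intro w. rewrite Hh. apply restrict_cons; auto.
Qed.

Lemma hom_layer c d (h : FT n r) : (forall v, coef h v = restrict (words n d) c v) ->
  g h = eval_layer A n b c d.
Proof.
  apply (hom_restrict c d). apply words_nodup.
  intros w Hw. apply words_spec in Hw. destruct Hw; split; auto; lia.
Qed.

Lemma truncate_S c N v : (forall w, ~ Forall (fun i => (i < n)%nat) w -> c w = C0) ->
  truncate (S N) c v = Cadd (truncate N c v) (restrict (words n (S N)) c v).
Proof.
  intro Hc. unfold truncate, restrict.
  destruct (Compare_dec.le_dec (length v) (S N)); destruct (Compare_dec.le_dec (length v) N);
    destruct (in_dec (list_eq_dec Nat.eq_dec) v (words n (S N))) as [I|I];
    try (apply words_spec in I; lia); rewrite ?Cadd0r, ?Cadd0l; auto; try lia.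
  apply Hc. intro Hf. apply I. apply words_spec. split; auto. lia.
Qed.

Lemma hom_truncate c N : (forall w, ~ Forall (fun i => (i < n)%nat) w -> c w = C0) ->
  forall h : FT n r, (forall v, coef h v = truncate N c v) -> g h = eval_partial A n b c N.
Proof.
  intro Hc. induction N; intros h Hh.
  - apply hom_layer. intro v. rewrite Hh. unfold truncate, restrict.
    destruct (Compare_dec.le_dec (length v) 0);
      destruct (in_dec (list_eq_dec Nat.eq_dec) v (words n 0)) as [I|I]; auto.
    + apply Hc. intro Hf. apply I. apply words_spec. split; auto. lia.
    + apply words_spec in I. lia.
  - destruct g_hom as [Hadd _].
    rewrite (Hadd (exist _ _ (truncate_in_FT n r c N Hc))
                  (exist _ _ (restrict_in_FT n r c (words n (S N)) (S N) ltac:(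
                     intros w Hw; apply words_spec in Hw; split; [apply Hw|lia]))) h).
    + unfold eval_partial; cbn [sumA_f]. f_equal; [apply IHN | apply hom_layer]; intro; auto.
    + intro v. rewrite Hh. apply truncate_S; auto.
Qed.

Lemma hom_Un_cvA (f : FT n r) : Un_cvA A (eval_partial A n b (coef f)) (g f).
Proof.
  intros i eps He.
  destruct (proj2_sig f) as [Hc Hgood]. fold (coef f) in Hc, Hgood.
  destruct g_hom as [Hadd [_ [_ [_ Hcont]]]].
  destruct (Hcont i) as [rho [K [Hrho HK]]].
  destruct (Hgood rho Hrho) as [s Hs].
  pose proof (Rabs_pos K).
  destruct (Hs (eps / (Rabs K + 1))) as [N0 HN0]; [apply Rdiv_lt_0_compat; lra|].
  exists N0. intros N HN.
  set (fT := exist _ _ (tail_in_FT n r f N) : FT n r).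
  assert (Hf : g f = add A (eval_partial A n b (coef f) N) (g fT)).
  { rewrite <- (hom_truncate (coef f) N Hc (exist _ _ (truncate_in_FT n r (coef f) N Hc)))
      by reflexivity.
    apply Hadd. intro w. unfold fT, coef; cbn [proj1_sig]. unfold truncate, tail.
    destruct (Compare_dec.le_dec (length w) N); [rewrite Cadd0r|rewrite Cadd0l]; auto. }
  rewrite sn_subC, Hf. unfold sub. rewrite (addC A _ (g fT)), <- addA, addN, add0r.
  eapply Rle_lt_trans. apply HK, norm_partial_tail_cv, Hs.
  pose proof (norm_partial_le_lim n (coef f) rho s N ltac:(lra) Hs).
  specialize (HN0 N HN). unfold Rdist in HN0. rewrite Rabs_minus_sym, Rabs_right in HN0 by lra.
  apply Rmult_lt_compat_l with (r := Rabs K + 1) in HN0; [|lra].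
  field_simplify in HN0; [|lra].
  pose proof (Rle_abs K). nra.
Qed.

End ContinuousHomomorphisms.

Lemma fold_Rmax_ge (l : list R) y : In y l -> y <= fold_right Rmax 0 l.
Proof.
  induction l; simpl; intro H. destruct H. destruct H as [->|H]. apply Rmax_l.
  eapply Rle_trans. apply IHl; auto. apply Rmax_r.
Qed.

Lemma fold_Rmax_ge0 (l : list R) : 0 <= fold_right Rmax 0 l.
Proof. induction l; simpl. lra. eapply Rle_trans. apply IHl. apply Rmax_r. Qed.

Lemma fold_Rmax_le (l : list R) B :
  0 <= B -> (forall y, In y l -> y <= B) -> fold_right Rmax 0 l <= B.
Proof. induction l; simpl; intros HB H. auto. apply Rmax_lub; auto. Qed.

Lemma geometric_bound_of_eventually (w : nat -> R) rho :
  (forall d, 0 <= w d) -> 0 < rho -> (exists N0, forall d, (N0 < d)%nat -> w d <= rho ^ d) ->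
  exists M, 1 <= M /\ forall d, w d <= M * rho ^ d.
Proof.
  intros Hw Hr [N0 HN0].
  assert (Hq : forall d, 0 <= w d / rho ^ d).
  { intro d. apply Rmult_le_pos; auto. left; apply Rinv_0_lt_compat, pow_lt; lra. }
  exists (1 + sum_f_R0 (fun d => w d / rho ^ d) N0). pose proof (cond_pos_sum _ N0 Hq).
  split; [lra|]. intro d. pose proof (pow_lt rho d Hr).
  destruct (Compare_dec.le_lt_dec d N0) as [Hd|Hd].
  - pose proof (sum_f_R0_ge_term _ d N0 Hq Hd).
    replace (w d) with (w d / rho ^ d * rho ^ d) by (field; lra). nra.
  - specialize (HN0 d Hd). nra.
Qed.

Lemma layer_delta n w d rho k : In w (words n d) ->
  layer n (delta w) rho k = if Nat.eq_dec k d then rho ^ d else 0.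
Proof.
  intro Hw. unfold layer. destruct (Nat.eq_dec k d) as [->|Hk].
  - rewrite (lsum_single _ _ w); auto.
    + unfold delta. destruct (list_eq_dec Nat.eq_dec w w); [|congruence].
      rewrite Cnorm_C1; ring.
    + apply words_nodup.
    + intros x Hx Hxw. unfold delta.
      destruct (list_eq_dec Nat.eq_dec x w); [contradiction|]. rewrite Cnorm_C0; ring.
  - apply lsum_zero. intros x Hx. apply words_spec in Hx. apply words_spec in Hw. unfold delta.
    destruct (list_eq_dec Nat.eq_dec x w); [subst; lia|]. rewrite Cnorm_C0; ring.
Qed.

Lemma norm_partial_delta_cv n w d rho : In w (words n d) ->
  Un_cv (norm_partial n (delta w) rho) (rho ^ d).
Proof.
  intro Hw.
  assert (Hnp : forall N, norm_partial n (delta w) rho N =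
                          if Compare_dec.le_dec d N then rho ^ d else 0).
  { induction N; unfold norm_partial in *; cbn [sum_f_R0]; rewrite (layer_delta n w d) by auto.
    - destruct (Nat.eq_dec 0 d); destruct (Compare_dec.le_dec d 0); auto; lia.
    - rewrite IHN. destruct (Nat.eq_dec (S N) d); destruct (Compare_dec.le_dec d N);
        destruct (Compare_dec.le_dec d (S N)); try lia; ring. }
  intros eps He. exists d. intros N HN. unfold Rdist. rewrite Hnp.
  destruct (Compare_dec.le_dec d N); [|lia]. rewrite Rminus_diag, Rabs_R0; auto.
Qed.

Section WordBounds.
Variables (A : AMAlgebra) (n : nat) (r : R).

Lemma word_sup_ge q d (b : nat -> A) w :
  In w (words n d) -> q (word_prod A b w) <= word_sup A q n d b.
Proof. intro H. apply fold_Rmax_ge, (in_map (fun w => q (word_prod A b w))); auto. Qed.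

Lemma word_sup_le q d (b : nat -> A) B : 0 <= B ->
  (forall w, In w (words n d) -> q (word_prod A b w) <= B) -> word_sup A q n d b <= B.
Proof.
  intros HB H. apply fold_Rmax_le; auto. intros y Hy.
  apply in_map_iff in Hy. destruct Hy as [w [<- Hw]]. auto.
Qed.

Lemma word_sup_submult q (b : nat -> A) : submult_seminorm A q ->
  forall p k, word_sup A q n (p + k) b <= word_sup A q n p b * word_sup A q n k b.
Proof.
  intros [Hq0 [_ [_ Hqm]]] p k. apply word_sup_le.
  { apply Rmult_le_pos; apply fold_Rmax_ge0. }
  intros x Hx. apply words_spec in Hx. destruct Hx as [Hl Hf].
  rewrite <- (firstn_skipn p x) in Hf |- *. apply Forall_app in Hf. destruct Hf as [Hf1 Hf2].
  rewrite word_prod_app. eapply Rle_trans. apply Hqm.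
  apply Rmult_le_compat; auto; apply word_sup_ge, words_spec; split; auto.
  - apply firstn_length_le. lia.
  - rewrite length_skipn. lia.
Qed.

Definition word_bounded (b : nat -> A) : Prop :=
  forall i, exists rho M, 0 < rho < r /\ 0 <= M /\ geometric_word_bound A n b (sn A i) rho M.

Lemma ssc_word_bounded (a : nat -> A) :
  0 < r -> strictly_spectrally_contractive A n r a -> word_bounded a.
Proof.
  intros Hr Ha i.
  destruct (Ha (sn A i) (sn_submult_seminorm A i)) as [L [HL HLr]].
  { exists [i], 1. intro x; simpl; lra. }
  set (rho := (Rmax 0 L + r) / 2).
  assert (Hrho : 0 < rho < r /\ L < rho).
  { pose proof (Rmax_l 0 L). pose proof (Rmax_r 0 L).
    assert (Rmax 0 L < r) by (apply Rmax_lub_lt; lra). unfold rho; lra. }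
  destruct (geometric_bound_of_eventually (fun d => word_sup A (sn A i) n d a) rho)
    as [M [HM1 HM]].
  - intro d. apply fold_Rmax_ge0.
  - lra.
  - destruct (HL (rho - L)) as [N0 HN0]; [lra|]. exists N0. intros [|d] Hd; [lia|].
    apply le_pow_of_rootn_le; [lra|lia|].
    specialize (HN0 d ltac:(lia)). unfold Rdist in HN0.
    pose proof (Rle_abs (rootn (S d) (word_sup A (sn A i) n (S d) a) - L)). lra.
  - exists rho, M. split; [lra|]. split; [lra|].
    intros d w Hw. eapply Rle_trans; [apply word_sup_ge, Hw|apply HM].
Qed.

Lemma hom_word_bounded (phi : FT n r -> A) (b : nat -> A) :
  cont_hom A n r phi -> maps_gens A n r phi b -> word_bounded b.
Proof.
  intros Hphi Hb j. destruct (proj2 (proj2 (proj2 (proj2 Hphi))) j) as [rho [K [Hrho HK]]].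
  exists rho, (Rabs K). split; auto. split; [apply Rabs_pos|].
  intros d w Hw. apply words_spec in Hw as Hw'. destruct Hw' as [Hlen Hf].
  rewrite <- (hom_delta A n r phi b Hphi Hb w Hf (exist _ _ (delta_in_FT n r w Hf))) by auto.
  eapply Rle_trans; [apply HK|].
  - apply (norm_partial_delta_cv n w d rho Hw).
  - apply Rmult_le_compat_r. apply pow_le; lra. apply Rle_abs.
Qed.

Lemma sn_list_word_bound (b : nat -> A) (l : list (idx A)) : 0 < r -> word_bounded b ->
  exists rho M, 0 < rho < r /\ 0 <= M /\
    geometric_word_bound A n b (fun x => fold_right (fun i s => sn A i x + s) 0 l) rho M.
Proof.
  intros Hr Hb. induction l as [|j l IH].
  - exists (r / 2), 0. split; [lra|]. split; [lra|]. intros d w _; simpl; lra.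
  - destruct IH as [rho [M [Hrho [HM H]]]]. destruct (Hb j) as [rj [Mj [Hrj [HMj Hj]]]].
    exists (Rmax rho rj), (Mj + M). split; [split|split].
    + eapply Rlt_le_trans; [apply Hrho|apply Rmax_l].
    + apply Rmax_lub_lt; lra.
    + lra.
    + intros d w Hw. simpl. specialize (H d w Hw). specialize (Hj d w Hw).
      assert (rho ^ d <= Rmax rho rj ^ d) by (apply pow_incr; split; [lra|apply Rmax_l]).
      assert (rj ^ d <= Rmax rho rj ^ d) by (apply pow_incr; split; [lra|apply Rmax_r]).
      nra.
Qed.

Lemma cont_seminorm_word_bound (b : nat -> A) q : 0 < r -> word_bounded b ->
  cont_seminorm A q -> exists rho M, 0 < rho < r /\ 0 <= M /\ geometric_word_bound A n b q rho M.
Proof.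
  intros Hr Hb [l [K HK]].
  destruct (sn_list_word_bound b l Hr Hb) as [rho [M [Hrho [HM H]]]].
  exists rho, (Rabs K * M). split; auto. split; [apply Rmult_le_pos; auto; apply Rabs_pos|].
  intros d w Hw. eapply Rle_trans; [apply HK|].
  assert (0 <= fold_right (fun i s => sn A i (word_prod A b w) + s) 0 l).
  { clear. induction l; simpl. lra. pose proof (sn_nonneg A a (word_prod A b w)); lra. }
  specialize (H d w Hw). simpl in H. pose proof (Rle_abs K). pose proof (Rabs_pos K).
  rewrite Rmult_assoc. apply Rle_trans with (Rabs K * fold_right (fun i s => sn A i (word_prod A b w) + s) 0 l).
  - apply Rmult_le_compat_r; auto.
  - apply Rmult_le_compat_l; auto.
Qed.

Lemma word_bounded_ssc (b : nat -> A) :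
  0 < r -> word_bounded b -> strictly_spectrally_contractive A n r b.
Proof.
  intros Hr Hb q Hq Hqc.
  destruct (cont_seminorm_word_bound b q Hr Hb Hqc) as [rho [M [Hrho [HM Hbound]]]].
  destruct (fekete (fun d => word_sup A q n d b)) as [L [HL0 [HLc HLv]]].
  - intro m. apply fold_Rmax_ge0.
  - intros p k _ _. apply word_sup_submult; auto.
  - exists L. split; auto.
    apply Rle_lt_trans with rho; [|lra].
    apply (rootn_infimum_le_rate (fun d => word_sup A q n d b) L M rho); try lra; auto.
    intros m _. apply word_sup_le; auto.
    apply Rmult_le_pos; auto. apply pow_le; lra.
Qed.

End WordBounds.

Lemma Un_cv_scaled_gap (u : nat -> R) s K :
  Un_cv u s -> Un_cv (fun m => K * (s - u m)) 0.
Proof.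
  intro Hu. replace 0 with (K * (s - s)) by ring.
  apply CV_mult; [|apply CV_minus; auto];
    intros e He; exists O; intros; unfold Rdist; rewrite Rminus_diag, Rabs_R0; auto.
Qed.

Section SeriesEvaluation.
Variables (A : AMAlgebra) (n : nat) (r : R) (a : nat -> A).
Hypothesis a_bounded : word_bounded A n r a.

Definition norm_finite (c : list nat -> C) : Prop :=
  forall rho, 0 < rho < r -> exists s, Un_cv (norm_partial n c rho) s.

Lemma eval_partial_cauchy c : norm_finite c -> exists l, Un_cvA A (eval_partial A n a c) l.
Proof.
  intro Hc. apply Un_cvA_cauchy. intros i eps He.
  destruct (a_bounded i) as [rho [M [Hrho [HM Hb]]]].
  destruct (Hc rho Hrho) as [s Hs].
  set (e' := eps / (2 * (M + 1))).
  assert (He' : 0 < e') by (apply Rdiv_lt_0_compat; lra).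
  assert (HMe : M * (2 * e') < eps).
  { unfold e'. apply Rmult_lt_reg_r with (M + 1); [lra|]. field_simplify; [|lra]. nra. }
  destruct (Hs e' He') as [N0 HN0]. exists N0.
  assert (Hk : forall N m, (N0 <= m)%nat -> (m <= N)%nat ->
             sn A i (sub A (eval_partial A n a c N) (eval_partial A n a c m)) < eps).
  { intros N m Hm HmN. eapply Rle_lt_trans. apply sn_eval_partial_sub; eauto; lra.
    pose proof (norm_partial_sub_lt n c rho s e' N0 m N HN0 Hm ltac:(lia)).
    apply Rle_lt_trans with (M * (2 * e')); auto. apply Rmult_le_compat_l; lra. }
  intros N m HN Hm. destruct (Compare_dec.le_ge_dec m N).
  - apply Hk; auto.
  - rewrite sn_subC. apply Hk; auto.
Qed.

Definition eval_series (f : FT n r) : A :=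
  epsilon (inhabits (zero A)) (Un_cvA A (eval_partial A n a (coef f))).

Lemma eval_series_spec f : Un_cvA A (eval_partial A n a (coef f)) (eval_series f).
Proof. unfold eval_series. apply epsilon_spec, eval_partial_cauchy. exact (proj2 (proj2_sig f)). Qed.

Lemma eval_series_add (f1 f2 h : FT n r) :
  (forall w, coef h w = Cadd (coef f1 w) (coef f2 w)) ->
  eval_series h = add A (eval_series f1) (eval_series f2).
Proof.
  intro H. apply (Un_cvA_unique A (eval_partial A n a (coef h))). apply eval_series_spec.
  apply (Un_cvA_eventually_eq A (fun N => add A (eval_partial A n a (coef f1) N)
                                                 (eval_partial A n a (coef f2) N))).
  - apply Un_cvA_add; apply eval_series_spec.
  - exists O. intros N _. rewrite (eval_partial_ext A n a _ _ N H).
    unfold eval_partial. rewrite <- sumA_f_add. apply sumA_f_ext. intros; apply eval_layer_add.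
Qed.

Lemma eval_series_scal l (f h : FT n r) : (forall w, coef h w = Cmul l (coef f w)) ->
  eval_series h = scal A l (eval_series f).
Proof.
  intro H. apply (Un_cvA_unique A (eval_partial A n a (coef h))). apply eval_series_spec.
  apply (Un_cvA_eventually_eq A (fun N => scal A l (eval_partial A n a (coef f) N))).
  - apply Un_cvA_scal, eval_series_spec.
  - exists O. intros N _. rewrite (eval_partial_ext A n a _ _ N H).
    unfold eval_partial. rewrite <- sumA_f_scal. apply sumA_f_ext. intros; apply eval_layer_scal.
Qed.

Lemma eval_series_one (h : FT n r) : (forall w, coef h w = unit_coef w) -> eval_series h = one A.
Proof.
  intro H. apply (Un_cvA_unique A (eval_partial A n a (coef h))). apply eval_series_spec.
  apply (Un_cvA_eventually_eq A (fun _ => one A)). apply Un_cvA_const.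
  exists O. intros N _. rewrite (eval_partial_ext A n a _ _ N H). induction N.
  - unfold eval_partial; simpl. rewrite eval_layer_0. apply scal1.
  - unfold eval_partial in *. cbn [sumA_f]. rewrite IHN, eval_layer_zero; [apply add0r|].
    intros w Hw. apply words_spec in Hw. destruct w; simpl in *; auto. lia.
Qed.

Lemma eval_series_zeta i : (i < n)%nat ->
  forall h : FT n r, (forall w, coef h w = zeta i w) -> eval_series h = a i.
Proof.
  intros Hi h Hh. apply (Un_cvA_unique A (eval_partial A n a (coef h))). apply eval_series_spec.
  apply (Un_cvA_eventually_eq A (fun _ => a i)). apply Un_cvA_const.
  exists 1%nat. intros N HN. rewrite (eval_partial_ext A n a _ _ N Hh).
  assert (L1 : eval_layer A n a (zeta i) 1 = a i).
  { rewrite eval_layer_S, (sumA_single A _ _ i).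
    - rewrite eval_layer_0. simpl. destruct (Nat.eq_dec i i); [|lia]. rewrite scal1, mul1r; auto.
    - apply seq_NoDup.
    - apply in_seq; lia.
    - intros x Hx Hxi. rewrite eval_layer_0. simpl. destruct (Nat.eq_dec x i); [lia|].
      rewrite scal0, mul0r; auto. }
  induction HN.
  - unfold eval_partial; simpl. rewrite eval_layer_0, L1. simpl. rewrite scal0, add0; auto.
  - unfold eval_partial in *; cbn [sumA_f]. rewrite IHHN, eval_layer_zero; [apply add0r|].
    intros w Hw. apply words_spec in Hw. destruct Hw as [Hl _].
    destruct w as [|x [|y w]]; simpl in *; auto; lia.
Qed.

Lemma eval_series_cont (j : idx A) : exists rho K, 0 < rho < r /\
  forall (f : FT n r) (s : R), Un_cv (norm_partial n (coef f) rho) s ->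
    sn A j (eval_series f) <= K * s.
Proof.
  destruct (a_bounded j) as [rho [M [Hrho [HM Hb]]]].
  exists rho, M. split; auto. intros f s Hs.
  apply (sn_le_of_Un_cvA A (eval_partial A n a (coef f))); [apply eval_series_spec|].
  intro N. eapply Rle_trans. apply (sn_eval_partial A n a j rho M); auto; lra.
  apply Rmult_le_compat_l; auto. apply norm_partial_le_lim; auto; lra.
Qed.

(* The defect of multiplicativity of the partial sums is a convolution of the layers of f
   with the tails of the norm series of g. *)
Lemma eval_partial_conv_close f g : norm_finite f -> norm_finite g ->
  forall i eps, 0 < eps -> exists N0, forall N, (N0 <= N)%nat ->
    sn A i (sub A (eval_partial A n a (conv f g) N)
                  (mul A (eval_partial A n a f N) (eval_partial A n a g N))) < eps.
Proof.
  intros Hf Hg i eps He.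
  destruct (a_bounded i) as [rho [M [Hrho [HM Hb]]]].
  destruct (Hf rho Hrho) as [sf Hsf]. destruct (Hg rho Hrho) as [sg Hsg].
  set (t := fun m => M * M * (sg - norm_partial n g rho m)).
  assert (Ht : forall m, 0 <= t m <= M * M * sg).
  { intro m. unfold t. pose proof (norm_partial_le_lim n g rho sg m ltac:(lra) Hsg).
    pose proof (norm_partial_ge0 n g rho m ltac:(lra)). split; [|nra].
    apply Rmult_le_pos; nra. }
  destruct (conv_summable_null_cv0 (layer n f rho) t sf (M * M * sg)
              (fun k => layer_ge0 n f rho k ltac:(lra)) Hsf Ht
              (Un_cv_scaled_gap _ sg (M * M) Hsg) eps He) as [N0 HN0].
  exists N0. intros N HN. specialize (HN0 N HN). unfold Rdist in HN0. rewrite Rminus_0_r in HN0.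
  rewrite sn_subC, eval_partial_conv.
  eapply Rle_lt_trans; [|apply Rle_lt_trans with (1 := Rle_abs _); exact HN0].
  eapply Rle_trans. apply sn_sumA_f. apply sum_f_R0_le. intros k Hk.
  eapply Rle_trans. apply sn_submult.
  pose proof (sn_eval_layer A n a i rho M Hb f k).
  pose proof (sn_eval_partial_sub A n a i rho M Hb g (N - k) N ltac:(lia)).
  pose proof (norm_partial_le_lim n g rho sg N ltac:(lra) Hsg).
  pose proof (layer_ge0 n f rho k ltac:(lra)).
  pose proof (sn_nonneg A i (eval_layer A n a f k)).
  pose proof (sn_nonneg A i (sub A (eval_partial A n a g N) (eval_partial A n a g (N - k)))).
  apply Rle_trans with ((M * layer n f rho k) * (M * (sg - norm_partial n g rho (N - k)))).
  - apply Rmult_le_compat; auto. eapply Rle_trans; [eassumption|].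
    apply Rmult_le_compat_l; lra.
  - unfold t. right; ring.
Qed.

Lemma eval_series_mul (f g h : FT n r) : (forall w, coef h w = conv (coef f) (coef g) w) ->
  eval_series h = mul A (eval_series f) (eval_series g).
Proof.
  intro H. apply (Un_cvA_unique A (eval_partial A n a (coef h))). apply eval_series_spec.
  apply (Un_cvA_close A (fun N => mul A (eval_partial A n a (coef f) N)
                                        (eval_partial A n a (coef g) N))).
  - apply Un_cvA_mul; apply eval_series_spec.
  - intros i eps He.
    destruct (eval_partial_conv_close (coef f) (coef g) (proj2 (proj2_sig f))
                (proj2 (proj2_sig g)) i eps He) as [N0 HN0].
    exists N0. intros N HN. rewrite (eval_partial_ext A n a _ _ N H). auto.
Qed.

Lemma eval_series_cont_hom : cont_hom A n r eval_series.
Proof.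
  split; [|split; [|split; [|split]]].
  - exact eval_series_add.
  - exact eval_series_scal.
  - exact eval_series_mul.
  - exact eval_series_one.
  - exact eval_series_cont.
Qed.

End SeriesEvaluation.

Theorem proposition6p11 (n : nat) (r : R) (A : AMAlgebra) :
  0 < r ->
  (forall a : nat -> A, strictly_spectrally_contractive A n r a ->
     exists gamma : FT n r -> A,
       cont_hom A n r gamma /\ maps_gens A n r gamma a /\
       (forall gamma' : FT n r -> A,
          cont_hom A n r gamma' -> maps_gens A n r gamma' a ->
          forall f, gamma' f = gamma f)) /\
  (forall (phi : FT n r -> A) (b : nat -> A),
     cont_hom A n r phi -> maps_gens A n r phi b ->
     strictly_spectrally_contractive A n r b).
Proof.
  intro Hr. split.
  - intros a Ha. pose proof (ssc_word_bounded A n r a Hr Ha) as Hb.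
    exists (eval_series A n r a). split; [|split].
    + apply eval_series_cont_hom, Hb.
    + exact (eval_series_zeta A n r a Hb).
    + intros g Hg Hga f. apply (Un_cvA_unique A (eval_partial A n a (coef f))).
      * apply (hom_Un_cvA A n r g a Hg Hga).
      * apply eval_series_spec, Hb.
  - intros phi b Hphi Hb.
    apply word_bounded_ssc; auto. apply (hom_word_bounded A n r phi b Hphi Hb).
Qed.
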